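(* The Euclidean plane $\mathbb R^2$ is strongly discrete homogeneous.
   Context: A subset $D$ of $X$ is discrete if each point of $X$ has a neighbourhood containing at most one point of $D$. A Hausdorff space $X$ is strongly discrete homogeneous (sDH) if for any two discrete subsets $A,B$ of $X$ and any bijection $f\colon A\to B$, $f$ extends to a homeomorphism of $X$ onto itself. *)

From HB Require Import structures.
From mathcomp Require Import all_boot all_order all_algebra.
From mathcomp Require Import all_classical all_reals all_analysis.
Set Implicit Arguments. Unset Strict Implicit. Unset Printing Implicit Defensive.
Local Open Scope classical_set_scope.

Definition discrete_subset {X : topologicalType} (D : set X) : Prop :=
  forall x : X, exists U : set X, nbhs x U /\
    (forall a b : X, D a -> D b -> U a -> U b -> a = b).

Definition self_homeomorphism {X : topologicalType} (h : X -> X) : Prop :=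
  exists g : X -> X, [/\ cancel h g, cancel g h, continuous h & continuous g].

Definition sDH (X : topologicalType) : Prop :=
  hausdorff_space X /\
  forall (A B : set X) (f : X -> X),
    discrete_subset A -> discrete_subset B -> set_bij A B f ->
    exists h : X -> X, self_homeomorphism h /\ (forall a, A a -> h a = f a).

From mathcomp Require Import all_boot all_order all_algebra.
From mathcomp Require Import all_classical all_reals all_analysis.
Import numFieldNormedType.Exports.
From mathcomp Require Import ring lra.
Import Order.TTheory GRing.Theory Num.Theory.
Local Open Scope classical_set_scope.
Local Open Scope ring_scope.

(* A discrete subset A of the plane is countable, so some centre c has pairwise
   distinct distances to the points of A, and these distances form a discrete
   subset of R.  A twist about c, rotating each circle around c by an angle that
   depends continuously on the radius, carries every a in A to (|a - c|, 0).  It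
   remains to realise a bijection between discrete subsets of the x-axis, which
   three shears (x, y) |-> (x, y + x), (x + psi y, y), (x, y + chi x) do; the
   angle, psi and chi are continuous functions with values prescribed on a
   discrete subset of R, which exist by the Tietze extension theorem. *)

Section discrete_subsets.
Context {T : topologicalType}.
Implicit Types A D K : set T.

Lemma discrete_closed {D} : hausdorff_space T -> discrete_subset D -> closed D.
Proof.
move=> hT dD x clDx.
have [U [Ux HU]] := dD x.
have [d [Dd Ud]] := clDx U Ux.
have [<-|dx] := pselect (d = x); first by [].
have xNd : nbhs x (~` [set d]).
  apply: open_nbhs_nbhs; split => [|/= xd]; last exact/dx/esym.
  by rewrite openC; exact/accessible_closed_set1/hausdorff_accessible.
have [e [De [Ue eNd]]] := clDx _ (filterI Ux xNd).
by move: eNd => /=; rewrite (HU e d).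
Qed.

Lemma discrete_within_continuous {U : topologicalType} {D} (f : T -> U) :
  discrete_subset D -> {within D, continuous f}.
Proof.
move=> dD; apply/subspace_continuousP => x Dx W /= fxW.
have [V [Vx HV]] := dD x.
apply: filterS (Vx) => y Vy Dy.
rewrite /= -(HV x y Dx Dy (nbhs_singleton Vx) Vy).
exact: nbhs_singleton fxW.
Qed.

Lemma discrete_compact_finite {K A} :
  compact K -> discrete_subset A -> finite_set (A `&` K).
Proof.
(* Otherwise the cofinite filter on A `&` K clusters at a point of K, yet every
   point has a neighbourhood meeting A at most once. *)
move=> cK dA; apply: contrapT => infAK.
pose F := [set S : set T | finite_set ((A `&` K) `\` S)].
have FF : ProperFilter F.
  constructor; first by rewrite /F /= setD0.
  constructor => [|S1 S2|S1 S2 S12]; rewrite /F /=.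
  - by rewrite setDT.
  - by rewrite setDIr finite_setU => ? ?; split.
  - by move/(sub_finite_set (setDS S12)).
have FK : F K by rewrite /F /=; apply: (sub_finite_set _ (finite_set0 T)) => y [[_ Ky]].
have [x [Kx clx]] := cK F FF FK.
have [U [Ux HU]] := dA x.
have FU : F (A `&` K `\` U).
  rewrite /F /=.
  have [[y [AKy Uy]]|noAU] := pselect (exists y, (A `&` K) y /\ U y).
    apply: (sub_finite_set _ (finite_set1 y)) => z [AKz zNU] /=.
    by apply: (HU z y AKz.1 AKy.1) => //; apply: contrapT => zU; apply: zNU.
  apply: (sub_finite_set _ (finite_set0 T)) => z [AKz zNU]; apply: noAU.
  by exists z; split => //; apply: contrapT => zU; apply: zNU.
by have [z [[_ zNU] Uz]] := clx _ _ FU Ux.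
Qed.

Lemma discrete_image_proper {R : realType} (f : T -> R) A :
  (forall M, exists2 K, compact K & [set x | `|f x| <= M] `<=` K) ->
  discrete_subset A -> discrete_subset (f @` A).
Proof.
move=> fproper dA t.
have [K cK fK] := fproper (`|t| + 1).
pose F := f @` (A `&` K) `\` [set t].
have cF : closed F.
  apply: (proj1 (@accessible_finite_set_closed _) (hausdorff_accessible (@Rhausdorff R))).
  by apply/finite_setD/finite_image; exact: discrete_compact_finite.
exists (`](t - 1), (t + 1)[ `&` ~` F); split.
  apply: open_nbhs_nbhs; split; first by apply: openI; [exact: itv_open | rewrite openC].
  split; first by rewrite /= in_itv /=; apply/andP; split; lra.
  by move=> [_ /=].
have eq_t x : (f @` A) x -> (`](t - 1), (t + 1)[ `&` ~` F) x -> x = t.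
  move=> [a Aa <-] [/= ta faNF]; apply: contrapT => fat.
  have Ka : K a.
    apply: fK; move: ta; rewrite in_itv /= ler_norml => /andP[t1 t2].
    have [tl tr] : - `|t| <= t /\ t <= `|t| by apply/andP; rewrite -ler_norml.
    by apply/andP; split; lra.
  by apply: faNF; split; [exists a | exact: fat].
by move=> x y Ax Ay Ux Uy; rewrite (eq_t x Ax Ux) (eq_t y Ay Uy).
Qed.

End discrete_subsets.

Section self_homeomorphisms.
Context {T : topologicalType}.
Implicit Types h : T -> T.

Lemma self_homeomorphism_comp {h1 h2} :
  self_homeomorphism h1 -> self_homeomorphism h2 -> self_homeomorphism (h2 \o h1).
Proof.
move=> [g1 [h1K g1K ch1 cg1]] [g2 [h2K g2K ch2 cg2]].
exists (g1 \o g2); split => [x|x|x|x] /=.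
- by rewrite h2K h1K.
- by rewrite g1K g2K.
- by apply: continuous_comp; [exact: ch1 | exact: ch2].
- by apply: continuous_comp; [exact: cg2 | exact: cg1].
Qed.

Lemma self_homeomorphism_inverse {h} :
  self_homeomorphism h -> exists2 g, self_homeomorphism g & cancel h g.
Proof. by move=> [g [hK gK ch cg]]; exists g => //; exists h. Qed.

End self_homeomorphisms.

Lemma translation_homeomorphism {K : numFieldType} {V : normedModType K} (c : V) :
  self_homeomorphism (fun v : V => v - c).
Proof.
exists (fun v => v + c); split => [v|v|v|v]; rewrite ?subrK ?addrK //.
- by apply: cvgB; [exact: cvg_id | exact: cvg_cst].
- by apply: cvgD; [exact: cvg_id | exact: cvg_cst].
Qed.

Section product_continuity.
Context {T U V : topologicalType}.

Lemma continuous_fst : continuous (@fst U V).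
Proof. by case=> u v; exact: cvg_fst. Qed.

Lemma continuous_snd : continuous (@snd U V).
Proof. by case=> u v; exact: cvg_snd. Qed.

Lemma continuous_pair (f : T -> U) (g : T -> V) :
  continuous f -> continuous g -> continuous (fun t => (f t, g t)).
Proof. by move=> cf cg t; have := cvg_pair (cf t) (cg t); exact. Qed.

End product_continuity.

Section squash.
Context {R : realType}.
Implicit Types x y : R.

Definition squash x := x / (1 + `|x|).
Definition unsquash y := y / (1 - `|y|).

Let one_addr_norm_gt0 x : 0 < 1 + `|x|.
Proof. by rewrite ltr_pwDl. Qed.

Lemma norm_squash x : `|squash x| = `|x| / (1 + `|x|).
Proof. by rewrite normrM normfV (gtr0_norm (one_addr_norm_gt0 x)). Qed.

Lemma squash_lt1 x : `|squash x| < 1.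
Proof. by rewrite norm_squash ltr_pdivrMr // mul1r ltrDr. Qed.

Lemma squashK : cancel squash unsquash.
Proof.
move=> x; have xD0 := lt0r_neq0 (one_addr_norm_gt0 x).
rewrite /unsquash norm_squash /squash.
by field; rewrite xD0 /= addrK oner_neq0.
Qed.

Lemma squash_continuous : continuous squash.
Proof.
move=> x; apply: cvgM; first exact: cvg_id.
apply: cvgV; first exact: lt0r_neq0.
by apply: cvgD; [exact: cvg_cst | exact: norm_continuous].
Qed.

Lemma unsquash_continuous y : `|y| < 1 -> {for y, continuous unsquash}.
Proof.
move=> y1; apply: cvgM; first exact: cvg_id.
apply: cvgV; first by rewrite subr_eq0 eq_sym lt_eqF.
by apply: cvgB; [exact: cvg_cst | exact: norm_continuous].
Qed.

End squash.

Section unbounded_tietze.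
Context {X : topologicalType} {R : realType}.
Hypothesis normalX : normal_space X.
Context {A : set X}.
Hypothesis clA : closed A.

Lemma continuous_lt1_extension (f : X -> R) :
  {within A, continuous f} -> (forall x, A x -> `|f x| < 1) ->
  exists g : X -> R, [/\ {in A, f =1 g}, continuous g & forall x, `|g x| < 1].
Proof.
move=> cf f1.
have [g [fg cg g1]] := continuous_bounded_extension normalX clA ltr01 cf
  (fun x Ax => ltW (f1 x Ax)).
(* Damp g by an Urysohn function that is 1 on A and 0 where |g| reaches 1. *)
pose B := (fun x => `|g x|) @^-1` [set 1].
have clB : closed B.
  apply: preimage_closed => [x _|].
    by apply: continuous_comp; [exact: cg | exact: norm_continuous].
  exact/accessible_closed_set1/hausdorff_accessible/Rhausdorff.
have AB0 : B `&` A = set0.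
  apply/seteqP; split => // x [/= gx1 Ax].
  by move: (f1 x Ax); rewrite fg ?inE // gx1 ltxx.
have [u [cu uB uA u01]] := urysohn_ext_itv normalX clB clA AB0 (@ltr01 R).
exists (fun x => g x * u x); split.
- by move=> x Ax; rewrite -fg // (uA (u x)) ?mulr1 //; exists x => //; exact/set_mem.
- by move=> x; apply: continuousM; [exact: cg | exact: cu].
move=> x; have /u01 := imageT u x; rewrite /= in_itv /= => /andP[u0 u1].
have [Bx|Bxn] := pselect (B x).
  by rewrite (uB (u x)) ?mulr0 ?normr0 //; exists x.
rewrite normrM (ger0_norm u0) (@le_lt_trans _ _ `|g x|) ?ler_piMr //.
by rewrite lt_neqAle g1 andbT; apply/eqP.
Qed.

Lemma continuous_extension (f : X -> R) : {within A, continuous f} ->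
  exists g : X -> R, continuous g /\ {in A, f =1 g}.
Proof.
move=> cf.
have csf : {within A, continuous (squash \o f)}.
  by move=> x; apply: continuous_comp (cf x) (squash_continuous _).
have [g [fg cg g1]] := continuous_lt1_extension _ csf (fun x _ => squash_lt1 (f x)).
exists (unsquash \o g); split.
  by move=> x; apply: continuous_comp; [exact: cg | exact: unsquash_continuous].
by move=> x Ax; rewrite /= -fg // squashK.
Qed.

End unbounded_tietze.

Lemma discrete_extension {X : topologicalType} {R : realType} {D : set X} (v : X -> R) :
  normal_space X -> hausdorff_space X -> discrete_subset D ->
  exists g : X -> R, continuous g /\ forall x, D x -> g x = v x.
Proof.
move=> normalX hX dD.
have [g [cg vg]] := continuous_extension normalX (discrete_closed hX dD) _
  (discrete_within_continuous v dD).
by exists g; split => // x Dx; rewrite vg ?inE.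
Qed.

Lemma discrete_image_extension {T : pointedType} {R : realType} {A : set T} {r : T -> R}
  (w : T -> R) :
  set_inj A r -> discrete_subset (r @` A) ->
  exists g : R -> R, continuous g /\ forall a, A a -> g (r a) = w a.
Proof.
move=> r_inj dA.
have [g [cg wg]] := discrete_extension (w \o pinv A r) pseudometric_normal
  (@Rhausdorff R) dA.
exists g; split => // a Aa.
by rewrite wg /= ?pinvKV ?inE //; exists a.
Qed.

Lemma countable_compl_nonempty {R : realType} {S : set R} : countable S -> ~` S !=set0.
Proof.
move=> cS; apply: contrapT => noS.
have S_all x : S x by apply: contrapT => Sx; apply: noS; exists x.
have : countable `[(0 : R), 1].
  by apply: sub_countable cS; apply: subset_card_le => x _; exact: S_all.
move/countable_lebesgue_measure0; rewrite lebesgue_measure_itv /= lte_fin ltr01.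
by rewrite -EFinB subr0 => /eqP; rewrite eqe oner_eq0.
Qed.

Section plane.
Context {R : realType}.
Local Notation P := (R * R)%type.
Implicit Types (A : set P) (c p q : P).

Definition box c (M : R) : set P :=
  [set p | `|p.1 - c.1| <= M /\ `|p.2 - c.2| <= M].

Lemma box_compact c M : compact (box c M).
Proof.
have -> : box c M = `[c.1 - M, c.1 + M] `*` `[c.2 - M, c.2 + M].
  by apply/seteqP; split => p /=; rewrite !in_itv /= -!ler_distl.
by apply: compact_setX; exact: segment_compact.
Qed.

Lemma discrete_countable {A} : discrete_subset A -> countable A.
Proof.
move=> dA.
have -> : A = \bigcup_(n in [set: nat]) (A `&` box 0 n%:R).
  apply/seteqP; split => [p Ap|p [n _ []]] //.
  have p_ge0 : 0 <= `|p.1| + `|p.2| by rewrite addr_ge0.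
  have pn := ltW (archi_boundP p_ge0).
  exists (Num.Def.archi_bound (`|p.1| + `|p.2|)) => //; split => //.
  by rewrite /box /= !subr0; split; apply: le_trans pn; rewrite ?lerDl ?lerDr.
apply: bigcup_countable => [|n _]; first exact: countableP.
exact/finite_set_countable/discrete_compact_finite/dA/box_compact.
Qed.

Definition enorm p : R := Num.sqrt (p.1 ^+ 2 + p.2 ^+ 2).

Lemma enorm_ge_fst p : `|p.1| <= enorm p.
Proof. by rewrite -sqrtr_sqr ler_wsqrtr // lerDl sqr_ge0. Qed.

Lemma enorm_ge_snd p : `|p.2| <= enorm p.
Proof. by rewrite -sqrtr_sqr ler_wsqrtr // lerDr sqr_ge0. Qed.

Lemma enorm_continuous : continuous enorm.
Proof.
case=> a b; apply: continuous_comp; last exact: sqrt_continuous.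
by apply: cvgD; apply: cvgM; (exact: cvg_fst || exact: cvg_snd).
Qed.

Lemma eq_enorm p q :
  enorm p = enorm q -> p.1 ^+ 2 + p.2 ^+ 2 = q.1 ^+ 2 + q.2 ^+ 2.
Proof. by move/eqP; rewrite eqr_sqrt ?addr_ge0 ?sqr_ge0 // => /eqP. Qed.

Lemma enorm_ge0 p : 0 <= enorm p.
Proof. exact: sqrtr_ge0. Qed.

Lemma discrete_enorm_image c {A} :
  discrete_subset A -> discrete_subset ((fun p => enorm (p - c)) @` A).
Proof.
apply: discrete_image_proper => M; exists (box c M); first exact: box_compact.
move=> p /=; rewrite ger0_norm ?enorm_ge0 // => pM.
by split; apply: le_trans pM;
  [exact: (enorm_ge_fst (p - c)) | exact: (enorm_ge_snd (p - c))].
Qed.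

Lemma sqr_dist_diff p q (s l : R) :
  ((p.1 - s) ^+ 2 + (p.2 - l) ^+ 2) - ((q.1 - s) ^+ 2 + (q.2 - l) ^+ 2)
  = (p.1 - q.1) * (p.1 + q.1 - 2 * s) + (p.2 - q.2) * (p.2 + q.2 - 2 * l).
Proof. by ring. Qed.

(* The centre [(s, l)] is equidistant from distinct [p], [q] iff it lies on their
   perpendicular bisector; choosing first [l] and then [s] outside countably many
   values avoids all these lines. *)
Lemma generic_center {A} : countable A ->
  exists c, set_inj A (fun p => enorm (p - c)).
Proof.
move=> cA; have cAA := countableX cA cA.
pose mid (pq : P * P) := (pq.1.2 + pq.2.2) / 2.
have [l lNmid] := countable_compl_nonempty (sub_countable (card_image_le mid _) cAA).
pose cut (pq : P * P) := ((pq.1.1 + pq.2.1)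
  + (pq.1.2 - pq.2.2) * (pq.1.2 + pq.2.2 - 2 * l) / (pq.1.1 - pq.2.1)) / 2.
have [s sNcut] := countable_compl_nonempty (sub_countable (card_image_le cut _) cAA).
exists (s, l) => p q /set_mem Ap /set_mem Aq /eq_enorm /= /eqP.
rewrite -subr_eq0 sqr_dist_diff => /eqP bisect.
have [e1|n1] := eqVneq p.1 q.1.
  have [e2|n2] := eqVneq p.2 q.2.
    by case: p q e1 e2 {Ap Aq bisect} => ? ? [? ?] /= -> ->.
  move: bisect; rewrite e1 subrr mul0r add0r => /eqP.
  rewrite mulf_eq0 subr_eq0 (negbTE n2) subr_eq0 => /eqP l_mid.
  by exfalso; apply: lNmid; exists (p, q) => //; rewrite /mid /= l_mid; field.
have eX : (p.2 - q.2) * (p.2 + q.2 - 2 * l) = (p.1 - q.1) * (2 * s - (p.1 + q.1)).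
  by rewrite -[LHS]subr0 -bisect; ring.
have n1' : p.1 - q.1 != 0 by rewrite subr_eq0.
exfalso; apply: sNcut; exists (p, q) => //.
by rewrite /cut /= eX; field.
Qed.

Definition shear_snd (phi : R -> R) p : P := (p.1, p.2 + phi p.1).
Definition shear_fst (psi : R -> R) p : P := (p.1 + psi p.2, p.2).

Lemma shear_snd_continuous phi : continuous phi -> continuous (shear_snd phi).
Proof.
move=> cphi; apply: continuous_pair => [|p]; first exact: continuous_fst.
apply: cvgD; first exact: continuous_snd.
exact: continuous_comp (continuous_fst p) (cphi _).
Qed.

Lemma shear_fst_continuous psi : continuous psi -> continuous (shear_fst psi).
Proof.
move=> cpsi; apply: continuous_pair => [p|]; last exact: continuous_snd.
apply: cvgD; first exact: continuous_fst.
exact: continuous_comp (continuous_snd p) (cpsi _).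
Qed.

Lemma shear_snd_homeomorphism phi :
  continuous phi -> self_homeomorphism (shear_snd phi).
Proof.
move=> cphi; exists (shear_snd (fun x => - phi x)).
split.
- by case=> x y; rewrite /shear_snd /= addrK.
- by case=> x y; rewrite /shear_snd /= subrK.
- exact: shear_snd_continuous.
- by apply: shear_snd_continuous => x; apply: cvgN; exact: cphi.
Qed.

Lemma shear_fst_homeomorphism psi :
  continuous psi -> self_homeomorphism (shear_fst psi).
Proof.
move=> cpsi; exists (shear_fst (fun y => - psi y)).
split.
- by case=> x y; rewrite /shear_fst /= addrK.
- by case=> x y; rewrite /shear_fst /= subrK.
- exact: shear_fst_continuous.
- by apply: shear_fst_continuous => y; apply: cvgN; exact: cpsi.
Qed.

Definition rotate (t : R) p : P :=
  (cos t * p.1 - sin t * p.2, sin t * p.1 + cos t * p.2).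

Lemma rotateK t : cancel (rotate t) (rotate (- t)).
Proof.
case=> x y; rewrite /rotate /= cosN sinN.
rewrite -[in RHS](mul1r x) -[in RHS](mul1r y) -(cos2Dsin2 t).
by congr pair; ring.
Qed.

Lemma enorm_rotate t p : enorm (rotate t p) = enorm p.
Proof.
rewrite /enorm /rotate /=; congr Num.sqrt.
by rewrite -[RHS]mul1r -(cos2Dsin2 t); ring.
Qed.

Lemma rotateN_polar t r : rotate (- t) (r * cos t, r * sin t) = (r, 0).
Proof.
rewrite /rotate /= cosN sinN -[in RHS](mul1r r) -(cos2Dsin2 t).
by congr pair; ring.
Qed.

Lemma rotate_continuous (th : P -> R) : continuous th ->
  continuous (fun p => rotate (th p) p).
Proof.
move=> cth.
have ccos : continuous (fun p => cos (th p)).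
  by move=> p; apply: continuous_comp; [exact: cth | exact: continuous_cos].
have csin : continuous (fun p => sin (th p)).
  by move=> p; apply: continuous_comp; [exact: cth | exact: continuous_sin].
have [c1 c2] := (@continuous_fst R R, @continuous_snd R R).
by apply: continuous_pair => p; [apply: cvgB | apply: cvgD]; apply: cvgM;
  (exact: ccos || exact: csin || exact: c1 || exact: c2).
Qed.

Definition twist (th : R -> R) p : P := rotate (th (enorm p)) p.

Lemma twist_continuous th : continuous th -> continuous (twist th).
Proof.
move=> cth; apply: rotate_continuous => p.
by apply: continuous_comp; [exact: enorm_continuous | exact: cth].
Qed.

Lemma twist_homeomorphism th : continuous th -> self_homeomorphism (twist th).
Proof.
move=> cth; exists (twist (fun r => - th r)); split.
- by move=> p; rewrite /twist enorm_rotate rotateK.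
- move=> p; rewrite /twist enorm_rotate.
  by have := rotateK (- th (enorm p)) p; rewrite opprK.
- exact: twist_continuous.
- by apply: twist_continuous => r; apply: cvgN; exact: cth.
Qed.

Lemma polar_coordinates p : exists t, p = (enorm p * cos t, enorm p * sin t).
Proof.
case: p => a b; rewrite /enorm /=; set r := Num.sqrt _.
have r2 : r ^+ 2 = a ^+ 2 + b ^+ 2 by rewrite sqr_sqrtr // addr_ge0 ?sqr_ge0.
have [r0|rn0] := eqVneq r 0.
  have [-> ->] : a = 0 /\ b = 0 by move: r2; rewrite r0 expr0n /=; split; nra.
  by exists 0; rewrite r0 !mul0r.
have r_gt0 : 0 < r by rewrite lt_neqAle eq_sym rn0 sqrtr_ge0.
pose x := a / r.
have x1 : -1 <= x <= 1.
  rewrite -ler_norml normrM normfV (gtr0_norm r_gt0) ler_pdivrMr // mul1r.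
  exact: (enorm_ge_fst (a, b)).
have sin_acos_x : sin (acos x) = `|b / r|.
  rewrite sin_acos // -sqrtr_sqr; congr Num.sqrt.
  by rewrite !expr_div_n -[1](divff (expf_neq0 2 rn0)) -mulrBl r2; congr (_ / _); ring.
have cos_acos_x : r * cos (acos x) = a by rewrite acosK ?inE // /x mulrC divfK.
have [b_ge0|b_lt0] := leP 0 b.
  exists (acos x); congr pair => //.
  by rewrite sin_acos_x ger0_norm ?divr_ge0 ?sqrtr_ge0 // mulrC divfK.
exists (- acos x); rewrite cosN sinN; congr pair => //.
have br_lt0 : b / r < 0 by rewrite ltr_pdivrMr // mul0r.
by rewrite sin_acos_x ltr0_norm // opprK mulrC divfK.
Qed.

Lemma discrete_to_axis {A} : discrete_subset A ->
  exists (h : P -> P) (r : P -> R), [/\ self_homeomorphism h, set_inj A r,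
    discrete_subset (r @` A) & forall a, A a -> h a = (r a, 0)].
Proof.
move=> dA.
have [c r_inj] := generic_center (discrete_countable dA).
pose r p := enorm (p - c).
have [ang ang_polar] := choice polar_coordinates.
have [th [cth thE]] := discrete_image_extension (fun a => - ang (a - c)) r_inj
  (discrete_enorm_image c dA).
exists (twist th \o (fun p => p - c)), r; split => //.
- apply: self_homeomorphism_comp; last exact: twist_homeomorphism.
  exact: translation_homeomorphism.
- exact: discrete_enorm_image.
move=> a Aa; rewrite /= /twist thE // {2}(ang_polar (a - c)).
by rewrite rotateN_polar.
Qed.

Lemma axis_transfer {T : pointedType} {A : set T} {r s : T -> R} :
  set_inj A r -> set_inj A s ->
  discrete_subset (r @` A) -> discrete_subset (s @` A) ->
  exists h : P -> P, self_homeomorphism h /\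
    forall a, A a -> h (r a, 0) = (s a, 0).
Proof.
move=> r_inj s_inj dr ds.
have [psi [cpsi psiE]] := discrete_image_extension (fun a => s a - r a) r_inj dr.
have [chi [cchi chiE]] := discrete_image_extension (fun a => - r a) s_inj ds.
(* (r a, 0) |-> (r a, r a) |-> (s a, r a) |-> (s a, 0) *)
exists (shear_snd chi \o shear_fst psi \o shear_snd id); split.
  apply: self_homeomorphism_comp; first exact: shear_snd_homeomorphism (fun _ => cvg_id).
  apply: self_homeomorphism_comp; first exact: shear_fst_homeomorphism.
  exact: shear_snd_homeomorphism.
move=> a Aa; rewrite /shear_snd /shear_fst /= add0r psiE // subrKC chiE //.
by rewrite subrr.
Qed.

End plane.

Theorem mainTheorem8 (R : realType) : sDH (R * R)%type.
Proof.
split; first exact: norm_hausdorff.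
move=> A B f dA dB [fAB f_inj f_surj].
have [hA [rA [hA_homeo rA_inj rA_disc hAE]]] := discrete_to_axis dA.
have [hB [rB [hB_homeo rB_inj rB_disc hBE]]] := discrete_to_axis dB.
have [gB gB_homeo hBK] := self_homeomorphism_inverse hB_homeo.
have rBf_inj : set_inj A (rB \o f).
  move=> a b Aa Ab /rB_inj rBab; apply: f_inj => //.
  by apply: rBab; rewrite inE; apply: fAB; exact: set_mem.
have rBf_disc : discrete_subset ((rB \o f) @` A).
  by rewrite -image_comp (surj_image_eq _ f_surj) // => _ [a Aa <-]; exact: fAB.
have [h [h_homeo hE]] := axis_transfer rA_inj rBf_inj rA_disc rBf_disc.
exists (gB \o h \o hA); split.
  exact: self_homeomorphism_comp hA_homeo (self_homeomorphism_comp h_homeo gB_homeo).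
by move=> a Aa; rewrite /= hAE // hE // -hBE ?hBK //; exact: fAB.
Qed.
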